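(* Let $\tau$ be a type and let $X$ be a finite set of ordinals. There is a construction scheme over $X$ of type $\tau$ if and only if $|X|=m_k$ for some $k\in\omega$. Moreover, if there is a construction scheme over $X$ of type $\tau$, it is unique.
   Context: A type is a sequence $\tau=\{(m_k,n_{k+1},r_{k+1})\}_{k\in\omega}$ of natural numbers with $m_0=1$; $n_k\ge2$ for $k\ge1$; every $r\in\omega$ equals $r_k$ for infinitely many $k$; $m_k>r_{k+1}$; and $m_{k+1}=r_{k+1}+(m_k-r_{k+1})n_{k+1}$ for all $k$. For a set of ordinals $X$ and $\mathcal F\subseteq[X]^{<\omega}$, $\mathcal F_k$ is the set of elements of rank $k$ in the well-founded order $(\mathcal F,\subsetneq)$; $A\sqsubseteq B$ means $A\subseteq B$ and every element of $B$ below an element of $A$ is in $A$; $A<B$ means every element of $A$ is below every element of $B$. $\mathcal F$ is a construction scheme over $X$ of type $\tau$ if (1) every finite subset of $X$ lies in a member of $\mathcal F$; (2) $|F|=m_k$ for $F\in\mathcal F_k$; (3) $E\cap F\sqsubseteq E$ and $E\cap F\sqsubseteq F$ for $E,F\in\mathcal F_k$; (4) each $F\in\mathcal F_{k+1}$ is the union of uniquely determined $F_0,\dots,F_{n_{k+1}-1}\in\mathcal F_k$ forming a $\Delta$-system with root $R(F)$, $|R(F)|=r_{k+1}$, and $R(F)<F_0\setminus R(F)<\dots<F_{n_{k+1}-1}\setminus R(F)$. *)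

From HB Require Import structures.
From mathcomp Require Import all_boot all_order.
From mathcomp Require Import finmap.
Set Implicit Arguments. Unset Strict Implicit. Unset Printing Implicit Defensive.
Import Order.TTheory.

(* A type tau = {(m_k, n_{k+1}, r_{k+1})}_k, given by three sequences
   m n r : nat -> nat (n 0 and r 0 are unused). *)
Definition is_type (m n r : nat -> nat) : Prop :=
  [/\ m 0 = 1,
      (forall k, 1 <= k -> 2 <= n k),
      (forall x N, exists k, N < k /\ r k = x),
      (forall k, r k.+1 < m k) &
      (forall k, m k.+1 = r k.+1 + (m k - r k.+1) * n k.+1)].

Local Open Scope fset_scope.

Section CS.
Context {disp : Order.disp_t} {T : orderType disp}.

Definition set_lt (A B : {fset T}) : Prop :=
  forall a b, a \in A -> b \in B -> (a < b)%O.

Definition init_seg (A B : {fset T}) : Prop :=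
  A `<=` B /\ (forall b a, b \in B -> a \in A -> (b < a)%O -> b \in A).

(* Rank in the well-founded order (F, proper inclusion):
   rank A = sup { rank B + 1 : B in F, B proper subset of A }.
   The fuel #|A|.+1 suffices since proper subsets are strictly smaller. *)
Fixpoint rank_aux (F : {fset {fset T}}) (fuel : nat) (A : {fset T}) : nat :=
  match fuel with
  | 0 => 0
  | fuel'.+1 => \max_(B <- F | B `<` A) (rank_aux F fuel' B).+1
  end.

Definition rank (F : {fset {fset T}}) (A : {fset T}) : nat :=
  rank_aux F (#|` A|).+1 A.

Definition level (F : {fset {fset T}}) (k : nat) (A : {fset T}) : Prop :=
  A \in F /\ rank F A = k.

Definition decomposition (F : {fset {fset T}}) (k p rr : nat)
    (A : {fset T}) (s : 'I_p -> {fset T}) : Prop :=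
  exists R : {fset T},
    [/\ (forall i, level F k (s i)),
        A = \bigcup_(i <- enum (ordinal p)) s i,
        (forall i j, i != j -> s i `&` s j = R) /\ #|` R| = rr,
        (forall i, set_lt R (s i `\` R)) &
        (forall i j : 'I_p, (i < j)%N -> set_lt (s i `\` R) (s j `\` R))].

Definition construction_scheme (m n r : nat -> nat)
    (X : {fset T}) (F : {fset {fset T}}) : Prop :=
  [/\ (forall A, A \in F -> A `<=` X),
      (forall A, A `<=` X -> exists2 B, B \in F & A `<=` B),
      (forall k A, level F k A -> #|` A| = m k),
      (forall k E G, level F k E -> level F k G ->
          init_seg (E `&` G) E /\ init_seg (E `&` G) G) &
      (forall k A, level F k.+1 A ->
          exists s : 'I_(n k.+1) -> {fset T},
            decomposition F k (r k.+1) A s /\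
            (forall s' : 'I_(n k.+1) -> {fset T},
                decomposition F k (r k.+1) A s' -> forall i, s' i = s i))].

End CS.

(* In a scheme over X the top element is X itself, and the
   levels are recovered from the top down: an element E of level k meets the
   level-(k+1) set A containing max E in an initial segment of E, so E is one
   of the pieces of A.  These pieces are determined by A: a Delta-system
   R < F_0 \ R < ... < F_(p-1) \ R with pieces of equal size is unique, since
   R and every prefix F_0 u ... u F_i are initial segments of A whose sizes
   are fixed.

   If |X| = m_k, enumerate X increasingly by g on [0, m_k) and let
   the level-j sets be the images of g composed with embeddings
   [0, m_j) -> [0, m_(j+1)) for the successive levels, where the i-th embedding
   fixes the root [0, r_(j+1)) and shifts the rest by i (m_j - r_(j+1)).  Two
   such compositions of the same level agree on an initial segment of [0, m_j)
   and take no other common values, which gives the initial-segment axiom. *)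

From HB Require Import structures.
From mathcomp Require Import all_boot all_order.
From mathcomp Require Import finmap zify boolp.
Set Implicit Arguments. Unset Strict Implicit. Unset Printing Implicit Defensive.
Import Order.TTheory.

Section TypeArithmetic.
Variables (m n r : nat -> nat).
Hypothesis ty : is_type m n r.

Lemma type_n_gt1 k : 1 < n k.+1.
Proof. by case: ty => _ + _ _ _; apply. Qed.

Lemma type_mS k : m k.+1 = r k.+1 + (m k - r k.+1) * n k.+1.
Proof. by case: ty => _ _ _ _; apply. Qed.

Lemma type_r_lt k : r k.+1 < m k.
Proof. by case: ty => _ _ _ + _; apply. Qed.

Lemma type_m_ltS k : m k < m k.+1.
Proof. by rewrite type_mS; have := type_r_lt k; have := type_n_gt1 k; nia. Qed.

Lemma type_m_homo : {homo m : j j' / j < j'}.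
Proof. exact: homo_ltn ltn_trans type_m_ltS. Qed.

Lemma type_m_leq : {mono m : j j' / j <= j'}.
Proof. exact: leq_mono type_m_homo. Qed.

Lemma type_m_inj : injective m.
Proof. exact: incn_inj type_m_leq. Qed.

Lemma type_m_gt0 k : 0 < m k.
Proof. by case: k => [|k]; [case: ty => -> | exact: leq_ltn_trans (type_m_ltS k)]. Qed.

End TypeArithmetic.

Local Open Scope fset_scope.

Lemma rank_aux_fuel disp (T : orderType disp) (F : {fset {fset T}}) f f' (A : {fset T}) :
  #|` A| < f -> #|` A| < f' -> rank_aux F f A = rank_aux F f' A.
Proof.
elim: f f' A => [|f IH] [|f'] A //= hf hf'.
apply: eq_bigr => B /fproper_ltn_card ltBA; congr S.
by apply: IH; apply: leq_trans ltBA _; rewrite -ltnS.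
Qed.

Lemma rankE disp (T : orderType disp) (F : {fset {fset T}}) (A : {fset T}) :
  rank F A = \max_(B <- F | B `<` A) (rank F B).+1.
Proof.
apply: eq_bigr => B /fproper_ltn_card ltBA; congr S.
exact: rank_aux_fuel.
Qed.

Section InitialSegments.
Context {disp : Order.disp_t} {T : orderType disp}.
Implicit Types (A B E R : {fset T}).

Lemma init_seg_total A R R' :
  init_seg R A -> init_seg R' A -> R `<=` R' \/ R' `<=` R.
Proof.
move=> [RA segR] [R'A segR'].
case: (boolP (R' `<=` R)) => [|/fsubsetPn[y yR' yR]]; first by right.
left; apply/fsubsetP => x xR.
have yA := fsubsetP R'A y yR'; have xA := fsubsetP RA x xR.
case: (ltgtP x y) => [xy|yx|xy]; first exact: segR' xy.
  by case/negP: yR; exact: segR yx.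
by move: yR; rewrite -xy xR.
Qed.

Lemma init_seg_card_inj A R R' :
  init_seg R A -> init_seg R' A -> #|` R| = #|` R'| -> R = R'.
Proof.
move=> segR segR' eqRR'; apply/eqP.
case: (init_seg_total segR segR') => sub; first by rewrite eqEfcard sub eqRR' leqnn.
by rewrite eq_sym eqEfcard sub eqRR' leqnn.
Qed.

Lemma init_seg_max B E e :
  init_seg B E -> e \in B -> (forall x, x \in E -> (x <= e)%O) -> E `<=` B.
Proof.
move=> [_ segB] eB maxe; apply/fsubsetP => x xE.
by have := maxe x xE; rewrite le_eqVlt => /predU1P[-> //|]; exact: segB.
Qed.

Lemma fset_max E : E != fset0 -> exists2 e, e \in E & forall x, x \in E -> (x <= e)%O.
Proof.
case/fset0Pn => e0 e0E; exists (\big[Order.max/e0]_(x <- E) x).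
  rewrite big_seq; apply: (big_ind (fun y => y \in E)) => // x y xE yE.
  by rewrite /Order.max; case: ifP.
by move=> x xE; apply: le_bigmax_seq.
Qed.

End InitialSegments.

Section DeltaSystems.
Context {disp : Order.disp_t} {T : orderType disp}.
Implicit Types (A R : {fset T}).

Definition ordered_delta A p (s : 'I_p -> {fset T}) R : Prop :=
  [/\ A = \bigcup_(i <- enum 'I_p) s i,
      (forall i j, i != j -> s i `&` s j = R),
      (forall i, set_lt R (s i `\` R)) &
      (forall i j : 'I_p, (i < j)%N -> set_lt (s i `\` R) (s j `\` R))].

Lemma decompositionP (F : {fset {fset T}}) k rr A p (s : 'I_p -> {fset T}) :
  decomposition F k rr A s <->
  exists R, [/\ forall i, level F k (s i), ordered_delta A s R & #|` R| = rr].
Proof.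
by split=> [[R [? ? [? ?] ? ?]]|[R [? [? ? ? ?] ?]]]; exists R.
Qed.

Definition prefix_union p (s : 'I_p -> {fset T}) (i : nat) : {fset T} :=
  \bigcup_(l <- enum 'I_p | (l < i)%N) s l.

Lemma bigcup_ordP p (s : 'I_p -> {fset T}) (P : pred 'I_p) x :
  reflect (exists2 i, P i & x \in s i) (x \in \bigcup_(i <- enum 'I_p | P i) s i).
Proof.
apply: (iffP (bigfcupP _ _ _ _)) => [[i /andP[_ Pi] xi]|[i Pi xi]]; exists i => //.
by rewrite mem_enum Pi.
Qed.

Section OrderedDelta.
Variables (A : {fset T}) (p : nat) (s : 'I_p -> {fset T}) (R : {fset T}).
Hypotheses (p_gt1 : 1 < p) (dS : ordered_delta A s R).

Lemma delta_piece_sub i : s i `<=` A.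
Proof.
case: dS => -> _ _ _; apply/fsubsetP => x xi.
by apply/bigcup_ordP; exists i.
Qed.

Lemma delta_root_sub i : R `<=` s i.
Proof.
case: dS => _ meet _ _.
have [j ji] : exists j : 'I_p, j != i.
  have p0 : 0 < p by exact: ltnW.
  case: (eqVneq i (Ordinal p0)) => [->|]; last by exists (Ordinal p0); rewrite eq_sym.
  by exists (Ordinal p_gt1).
by rewrite -(meet j i ji) fsubsetIr.
Qed.

Lemma delta_outside_root x : x \in A -> x \notin R -> exists i, x \in s i `\` R.
Proof.
case: dS => -> _ _ _ /bigcup_ordP[i _ xi] xR.
by exists i; rewrite in_fsetD xR.
Qed.

Lemma delta_root_init_seg : init_seg R A.
Proof.
have p0 : 0 < p by exact: ltnW.
split; first exact: fsubset_trans (delta_root_sub (Ordinal p0)) (delta_piece_sub _).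
move=> b a bA aR ba; apply/negPn/negP => bR.
have [i bi] := delta_outside_root bA bR.
case: dS => _ _ low _.
by have := low i a b aR bi; rewrite lt_gtF.
Qed.

Lemma delta_prefix_init_seg (i : 'I_p) : init_seg (prefix_union s i `|` s i) A.
Proof.
have memP x : x \in prefix_union s i `|` s i -> exists2 l : 'I_p, (l <= i)%N & x \in s l.
  case/fsetUP => [/bigcup_ordP[l li xl]|xi]; last by exists i.
  by exists l => //; exact: ltnW.
split.
  rewrite fsubUset delta_piece_sub andbT.
  by apply/fsubsetP => x /bigcup_ordP[l _ /(fsubsetP (delta_piece_sub l))].
move=> b a bA /(memP a)[la la_i a_la] ba.
case: (boolP (b \in R)) => bR.
  by rewrite in_fsetU (fsubsetP (delta_root_sub i)) ?orbT.
have [lb b_lb] := delta_outside_root bA bR.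
have b_in_lb : b \in s lb by case/fsetDP: b_lb.
case: (ltngtP lb i) => [lb_i|i_lb|/val_inj lbi].
- by rewrite in_fsetU; apply/orP; left; apply/bigcup_ordP; exists lb.
- case: dS => _ _ low ord; exfalso.
  case: (boolP (a \in R)) => aR; first by have := low lb a b aR b_lb; rewrite lt_gtF.
  have a_la' : a \in s la `\` R by rewrite in_fsetD aR a_la.
  by have := ord la lb (leq_ltn_trans la_i i_lb) a b a_la' b_lb; rewrite lt_gtF.
- by rewrite in_fsetU -lbi b_in_lb orbT.
Qed.

Lemma delta_prefix_meet (i : 'I_p) : prefix_union s i `&` s i = prefix_union s i `&` R.
Proof.
case: dS => _ meet _ _; apply/fsetP => x; rewrite !in_fsetI.
case: (boolP (x \in prefix_union s i)) => //= /bigcup_ordP[l li xl].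
apply/idP/idP => [xi|/(fsubsetP (delta_root_sub i))//].
by rewrite -(meet l i) ?in_fsetI ?xl ?xi // neq_ltn li.
Qed.

End OrderedDelta.

Lemma ordered_delta_unique A p (s s' : 'I_p -> {fset T}) R R' :
  1 < p -> ordered_delta A s R -> ordered_delta A s' R' ->
  #|` R| = #|` R'| -> (forall i, #|` s i| = #|` s' i|) -> s =1 s'.
Proof.
move=> p_gt1 dS dS' cardR card_s.
have eqRR' : R = R'.
  exact: init_seg_card_inj (delta_root_init_seg p_gt1 dS) (delta_root_init_seg p_gt1 dS') cardR.
subst R'.
suff step (i : 'I_p) : (forall l : 'I_p, (l < i)%N -> s l = s' l) -> s i = s' i.
  by case=> i; elim/ltn_ind: i => i IH ip; apply: step => -[l lp] /= li; exact: IH.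
move=> IH; have eqU : prefix_union s i = prefix_union s' i by apply: eq_bigr.
have eqUs : prefix_union s i `|` s i = prefix_union s i `|` s' i.
  apply: (init_seg_card_inj (delta_prefix_init_seg p_gt1 dS i)).
    by rewrite eqU; exact: (delta_prefix_init_seg p_gt1 dS' i).
  have := cardfsUI (prefix_union s i) (s i).
  have := cardfsUI (prefix_union s' i) (s' i).
  rewrite (delta_prefix_meet p_gt1 dS) (delta_prefix_meet p_gt1 dS') -eqU card_s.
  lia.
have split_piece (U B : {fset T}) : B = (U `&` B) `|` ((U `|` B) `\` U).
  apply/fsetP => x; rewrite in_fsetU in_fsetI in_fsetD in_fsetU.
  by case: (x \in U); case: (x \in B).
rewrite (split_piece (prefix_union s i) (s i)) (split_piece (prefix_union s' i) (s' i)).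
by rewrite (delta_prefix_meet p_gt1 dS) (delta_prefix_meet p_gt1 dS') eqUs eqU.
Qed.

End DeltaSystems.

Section SchemeUniqueness.
Context {disp : Order.disp_t} {T : orderType disp}.
Variables (m n r : nat -> nat) (X : {fset T}).
Hypothesis ty : is_type m n r.

Section OneScheme.
Variable F : {fset {fset T}}.
Hypothesis HF : construction_scheme m n r X F.

Lemma scheme_sub A : A \in F -> A `<=` X.
Proof. by case: HF => + _ _ _ _; apply. Qed.

Lemma scheme_card k A : level F k A -> #|` A| = m k.
Proof. by case: HF => _ _ + _ _; apply. Qed.

Lemma scheme_init_seg k E E' : level F k E -> level F k E' -> init_seg (E `&` E') E.
Proof. by case: HF => _ _ _ + _ => /[apply] /[apply] -[]. Qed.

Lemma scheme_top_mem : X \in F.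
Proof.
case: HF => sub cover _ _ _; have [B BF XB] := cover X (fsubset_refl X).
suff -> : X = B by [].
by apply/eqP; rewrite eqEfsubset XB sub.
Qed.

Lemma scheme_card_top : #|` X| = m (rank F X).
Proof. exact: scheme_card (conj scheme_top_mem erefl). Qed.

Lemma scheme_level_le_top k A : level F k A -> k <= rank F X.
Proof.
move=> lA; rewrite -(type_m_leq ty) -scheme_card_top -(scheme_card lA).
by apply: fsubset_leq_card; apply: scheme_sub; case: lA.
Qed.

Lemma scheme_level_top A : level F (rank F X) A <-> A = X.
Proof.
split=> [lA|->]; last by split; [exact: scheme_top_mem|].
apply/eqP; rewrite eqEfcard (scheme_card lA) -scheme_card_top leqnn andbT.
by apply: scheme_sub; case: lA.
Qed.

Lemma scheme_decomposition k A : level F k.+1 A ->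
  exists s : 'I_(n k.+1) -> {fset T}, decomposition F k (r k.+1) A s.
Proof. by case: HF => _ _ _ _ /[apply] -[s [ds _]]; exists s. Qed.

Lemma scheme_cover k x : k <= rank F X -> x \in X -> exists2 A, level F k A & x \in A.
Proof.
move=> /subnKC; move: (rank F X - k) => d; elim: d k => [|d IH] k def_k xX.
  by exists X; rewrite // -[k]addn0 def_k scheme_level_top.
have [|A lA xA] := IH k.+1 _ xX; first by rewrite -def_k addSnnS.
have [s /decompositionP[R [ls [defA _ _ _] _]]] := scheme_decomposition lA.
by move: xA; rewrite defA => /bigcup_ordP[i _ xi]; exists (s i).
Qed.

Lemma scheme_level_piece k E : level F k E -> k < rank F X ->
  exists A (s : 'I_(n k.+1) -> {fset T}) i,
    [/\ level F k.+1 A, decomposition F k (r k.+1) A s & E = s i].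
Proof.
move=> lE lt_k; have [|e eE maxe] := fset_max (E := E).
  by rewrite -cardfs_gt0 (scheme_card lE) (type_m_gt0 ty).
have eX : e \in X by apply: (fsubsetP (scheme_sub _)) eE; case: lE.
have [A lA eA] := scheme_cover lt_k eX.
have [s ds] := scheme_decomposition lA.
have /decompositionP[R [ls [defA _ _ _] _]] := ds.
move: eA; rewrite defA => /bigcup_ordP[i _ e_si].
exists A, s, i; split => //; apply/eqP.
rewrite eqEfcard (scheme_card lE) (scheme_card (ls i)) leqnn andbT.
apply: fsubset_trans (init_seg_max (scheme_init_seg lE (ls i)) _ maxe) (fsubsetIr _ _).
by rewrite in_fsetI eE e_si.
Qed.

End OneScheme.

Variables F G : {fset {fset T}}.
Hypotheses (HF : construction_scheme m n r X F) (HG : construction_scheme m n r X G).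

Lemma scheme_rank_top : rank G X = rank F X.
Proof. by apply: (type_m_inj ty); rewrite -(scheme_card_top HF) -(scheme_card_top HG). Qed.

Lemma scheme_level_step k :
  k < rank F X -> (forall A, level F k.+1 A -> level G k.+1 A) ->
  forall E, level F k E -> level G k E.
Proof.
move=> lt_k stepF E lE.
have [A [s [i [lA ds ->]]]] := scheme_level_piece HF lE lt_k.
have [s' ds'] := scheme_decomposition HG (stepF A lA).
have /decompositionP[R [ls dS cardR]] := ds.
have /decompositionP[R' [ls' dS' cardR']] := ds'.
have -> : s = s'.
  apply/funext; apply: ordered_delta_unique (type_n_gt1 ty k) dS dS' _ _.
    by rewrite cardR cardR'.
  by move=> j; rewrite (scheme_card HF (ls j)) (scheme_card HG (ls' j)).
exact: ls'.
Qed.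

Lemma scheme_level_sub k A : level F k A -> level G k A.
Proof.
move=> lA; have := subnKC (scheme_level_le_top HF lA).
move: (rank F X - k) => d; elim: d k A lA => [|d IH] k A lA def_k.
  rewrite addn0 in def_k; move: lA; rewrite def_k => /(scheme_level_top HF) ->.
  by rewrite -scheme_rank_top; apply/(scheme_level_top HG).
apply: scheme_level_step lA; first by rewrite -def_k; lia.
by move=> B lB; apply: IH lB _; rewrite -def_k addSnnS.
Qed.

Lemma scheme_fsubset : F `<=` G.
Proof. by apply/fsubsetP => A AF; have [] : level G (rank F A) A by exact: scheme_level_sub. Qed.

End SchemeUniqueness.

Definition prefix_coherent (U : Type) (M : nat) (f f' : nat -> U) : Prop :=
  forall a b, a < M -> b < M -> f a = f' b -> a = b /\ (forall t, t <= a -> f t = f' t).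

Lemma prefix_coherent_comp (U : Type) M M' (p p' : nat -> U) (e e' : nat -> nat) :
  prefix_coherent M' p p' -> prefix_coherent M e e' ->
  (forall t, t < M -> e t < M') -> (forall t, t < M -> e' t < M') ->
  {homo e : a b / a <= b} -> prefix_coherent M (p \o e) (p' \o e').
Proof.
move=> coh_p coh_e eM e'M e_homo a b aM bM /= pe_ab.
have [e_ab agree_p] := coh_p _ _ (eM a aM) (e'M b bM) pe_ab.
have [ab agree_e] := coh_e _ _ aM bM e_ab.
by split=> // t ta; rewrite /= -agree_e // agree_p // e_homo.
Qed.

Section Embedding.
Local Open Scope nat_scope.
Variables (r c : nat).

Definition embed (i t : nat) : nat := if t < r then t else t + i * c.

Lemma embed_root i t : t < r -> embed i t = t.
Proof. by rewrite /embed => ->. Qed.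

Lemma embed_high i t : r <= t -> embed i t = t + i * c.
Proof. by rewrite /embed ltnNge => ->. Qed.

Lemma embed_homo i : {homo embed i : a b / a < b}.
Proof. by move=> a b; rewrite /embed; case: ifP; case: ifP; lia. Qed.

Lemma embed_ge i t : t <= embed i t.
Proof. by rewrite /embed; case: ifP; lia. Qed.

Lemma embed_lt n i t : t < r + c -> i < n -> embed i t < r + c * n.
Proof. by rewrite /embed; case: ifP; nia. Qed.

Lemma embed_ordered i i' a b :
  i < i' -> r <= a < r + c -> r <= b -> embed i a < embed i' b.
Proof.
move=> ii' /andP[ra ac] rb; rewrite !embed_high //.
have : i.+1 * c <= i' * c by apply: leq_mul.
nia.
Qed.

Hypothesis c_gt0 : 0 < c.

Lemma embed_onto n t : 0 < n -> t < r + c * n ->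
  exists i a, [/\ i < n, a < r + c & embed i a = t].
Proof.
move=> n_gt0 t_lt; case: (ltnP t r) => [tr|rt].
  by exists 0, t; rewrite embed_root //; split => //; lia.
exists ((t - r) %/ c), (r + (t - r) %% c).
have := divn_eq (t - r) c; have : (t - r) %% c < c by rewrite ltn_pmod.
rewrite embed_high ?leq_addr // ltn_divLR //; split => //; nia.
Qed.

Lemma embed_meet i i' a b : i != i' -> a < r + c -> b < r + c ->
  embed i a = embed i' b -> a < r /\ b = a.
Proof.
move=> ii' ac bc; rewrite /embed; case: ifP => ar; case: ifP => br; try lia.
case: (ltngtP i i') ii' => // [lt_ii'|lt_i'i] _.
  have : i.+1 * c <= i' * c by apply: leq_mul.
  nia.
have : i'.+1 * c <= i * c by apply: leq_mul.
nia.
Qed.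

Lemma embed_coherent i i' : prefix_coherent (r + c) (embed i) (embed i').
Proof.
move=> a b ac bc; case: (eqVneq i i') => [<-|ii'] e_ab.
  by split=> //; exact: (incn_inj (leq_mono (embed_homo i)) e_ab).
have [ar ->] := embed_meet ii' ac bc e_ab.
by split=> // t ta; rewrite !embed_root //; exact: leq_ltn_trans ar.
Qed.

End Embedding.

Section Enumerations.
Context {disp : Order.disp_t} {T : orderType disp}.
Implicit Types (f p : nat -> T).

Definition increasing_below (M : nat) f : Prop :=
  forall a b, a < b -> b < M -> (f a < f b)%O.

Definition fimg (M : nat) f : {fset T} := [fset f t | t in iota 0 M].

Lemma fimgP M f x : reflect (exists2 t, t < M & x = f t) (x \in fimg M f).
Proof.
apply: (iffP (imfsetP _ _ _ _)) => [[t /= tM ->]|[t tM ->]]; exists t => //.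
  by move: tM; rewrite mem_iota.
by rewrite /= mem_iota.
Qed.

Lemma fimg_in M f t : t < M -> f t \in fimg M f.
Proof. by move=> tM; apply/fimgP; exists t. Qed.

Lemma fimg_comp_sub M M' f (e : nat -> nat) :
  (forall t, t < M -> e t < M') -> fimg M (f \o e) `<=` fimg M' f.
Proof. by move=> eM; apply/fsubsetP => _ /fimgP[t tM ->]; exact: fimg_in (eM t tM). Qed.

Section Increasing.
Variables (M : nat) (f : nat -> T).
Hypothesis f_incr : increasing_below M f.

Lemma increasing_below_lt a b : a < M -> b < M -> (f a < f b)%O = (a < b).
Proof.
move=> aM bM; case: (ltngtP a b) => [ab|ba|->]; first exact: f_incr.
  by rewrite lt_gtF // f_incr.
by rewrite ltxx.
Qed.

Lemma increasing_below_inj a b : a < M -> b < M -> f a = f b -> a = b.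
Proof.
move=> aM bM fab; case: (ltngtP a b) => // [ab|ba].
  by have := f_incr ab bM; rewrite fab ltxx.
by have := f_incr ba aM; rewrite fab ltxx.
Qed.

Lemma card_fimg : #|` fimg M f| = M.
Proof.
rewrite card_in_imfset /= ?undup_id ?iota_uniq ?size_iota // => a b.
by rewrite !mem_iota; exact: increasing_below_inj.
Qed.

Lemma increasing_below_comp M0 (e : nat -> nat) :
  {homo e : a b / a < b} -> (forall t, t < M0 -> e t < M) ->
  increasing_below M0 (f \o e).
Proof. by move=> e_homo eM a b ab bM0; apply: f_incr; [exact: e_homo | exact: eM]. Qed.

Lemma increasing_below_sub M0 : M0 <= M -> increasing_below M0 f.
Proof. by move=> M0M a b ab bM0; apply: f_incr ab (leq_trans bM0 M0M). Qed.

Lemma increasing_below_coherent : prefix_coherent M f f.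
Proof. by move=> a b aM bM /(increasing_below_inj aM bM). Qed.

End Increasing.

Lemma init_seg_coherent M f f' :
  increasing_below M f -> increasing_below M f' -> prefix_coherent M f f' ->
  init_seg (fimg M f `&` fimg M f') (fimg M f).
Proof.
move=> f_incr f'_incr coh; split; first exact: fsubsetIl.
move=> _ _ /fimgP[tb tbM ->] /fsetIP[/fimgP[ta taM ->] /fimgP[ta' ta'M e_a]] lt_ba.
have [_ agree] := coh _ _ taM ta'M e_a.
rewrite (increasing_below_lt f_incr) // in lt_ba.
by rewrite in_fsetI fimg_in // agree ?fimg_in // ltnW.
Qed.

Lemma fimg_ordered_delta r c n p : 0 < c -> 0 < n -> increasing_below (r + c * n) p ->
  ordered_delta (fimg (r + c * n) p)
    (fun i : 'I_n => fimg (r + c) (p \o embed r c i)) (fimg r p).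
Proof.
move=> c_gt0 n_gt0 p_incr.
have e_lt (i : 'I_n) t : t < r + c -> embed r c i t < r + c * n by move/embed_lt; apply.
have root_in (i : 'I_n) t : t < r -> p t \in fimg (r + c) (p \o embed r c i).
  by move=> tr; apply/fimgP; exists t; rewrite /= ?embed_root //; lia.
have outside (i : 'I_n) x : x \in fimg (r + c) (p \o embed r c i) `\` fimg r p ->
    exists2 t, r <= t < r + c & x = p (embed r c i t).
  case/fsetDP => /fimgP[t tc ->] xR; exists t => //; rewrite tc andbT leqNgt.
  by apply: contra xR => tr; rewrite /= embed_root // fimg_in.
split.
- apply/fsetP => x; apply/fimgP/bigcup_ordP => [[t t_lt ->]|[i _ /fimgP[t tc ->]]].
    have [i [a [i_lt a_lt <-]]] := embed_onto c_gt0 n_gt0 t_lt.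
    by exists (Ordinal i_lt) => //; apply/fimgP; exists a.
  by exists (embed r c i t); [exact: e_lt | ].
- move=> i j ij; apply/fsetP => x; apply/fsetIP/fimgP.
    case=> /fimgP[a ac ->] /fimgP[b bc e_ab].
    have e_ab' := increasing_below_inj p_incr (e_lt i a ac) (e_lt j b bc) e_ab.
    have [ar _] := embed_meet c_gt0 ij ac bc e_ab'.
    by exists a; rewrite /= ?embed_root.
  by case=> t tr ->; split; exact: root_in.
- move=> i _ _ /fimgP[a ar ->] /outside[t /andP[rt tc] ->].
  by apply: p_incr; [exact: leq_trans ar (leq_trans rt (embed_ge r c i t)) | exact: e_lt].
- move=> i j ij _ _ /outside[a a_rng ->] /outside[b /andP[rb bc] ->].
  by apply: p_incr; [exact: embed_ordered | exact: e_lt].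
Qed.

Lemma fset_increasing_enum (x0 : T) (X : {fset T}) :
  exists2 g, increasing_below #|` X| g & X = fimg #|` X| g.
Proof.
pose s := sort <=%O (enum_fset X).
have size_s : size s = #|` X| by rewrite size_sort.
have s_sorted : sorted <%O s by rewrite sort_lt_sorted fset_uniq.
exists (nth x0 s).
  move=> a b ab bX; apply: (sorted_ltn_nth lt_trans x0 s_sorted) => //;
  by rewrite inE size_s // (ltn_trans ab bX).
apply/fsetP => x; apply/idP/fimgP => [xX|[t tX ->]].
  have xs : x \in s by rewrite mem_sort.
  by exists (index x s); [rewrite -size_s index_mem | rewrite nth_index].
by rewrite -(mem_sort <=%O) mem_nth // size_s.
Qed.

End Enumerations.

Section CanonicalScheme.
Context {disp : Order.disp_t} {T : orderType disp}.
Variables (m n r : nat -> nat) (k : nat) (g : nat -> T).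
Hypotheses (ty : is_type m n r) (g_incr : increasing_below (m k) g).

Local Notation piece_embed j i := (embed (r j.+1) (m j - r j.+1) i).

Inductive piece_enum : nat -> (nat -> T) -> Prop :=
| piece_enum_top : piece_enum k g
| piece_enum_piece j f i :
    piece_enum j.+1 f -> i < n j.+1 -> piece_enum j (f \o piece_embed j i).

Lemma type_piece_gt0 j : 0 < m j - r j.+1.
Proof. by rewrite subn_gt0 (type_r_lt ty). Qed.

Lemma type_m_pieces j : m j = (r j.+1 + (m j - r j.+1))%N.
Proof. by rewrite subnKC // ltnW // (type_r_lt ty). Qed.

Lemma piece_embed_lt j i t : i < n j.+1 -> t < m j -> piece_embed j i t < m j.+1.
Proof. by move=> i_lt t_lt; rewrite (type_mS ty); apply: embed_lt i_lt; rewrite -type_m_pieces. Qed.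

Lemma piece_enum_inv j f : piece_enum j f ->
  (j = k /\ f = g) \/
  exists2 p, piece_enum j.+1 p & exists2 i, i < n j.+1 & f = p \o piece_embed j i.
Proof. by case=> [|j' p i pp i_lt]; [left | right; exists p => //; exists i]. Qed.

Lemma piece_enum_le j f : piece_enum j f -> j <= k.
Proof. by elim=> // j' f' i _ IH _; exact: ltnW. Qed.

Lemma piece_enum_incr j f : piece_enum j f -> increasing_below (m j) f.
Proof.
elim=> // {}j {}f i _ IH i_lt.
by apply: (increasing_below_comp IH (embed_homo _ _ i)) => t; exact: piece_embed_lt.
Qed.

Lemma piece_enum_sub j f : piece_enum j f -> fimg (m j) f `<=` fimg (m k) g.
Proof.
elim=> // {}j {}f i _ IH i_lt; apply: fsubset_trans IH; apply: fimg_comp_sub => t.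
exact: piece_embed_lt.
Qed.

Lemma piece_enum_coherent j f f' :
  piece_enum j f -> piece_enum j f' -> prefix_coherent (m j) f f'.
Proof.
move=> pf; elim: pf f' => [|{}j p i pp IH i_lt] f' /piece_enum_inv[[jk ->]|[p' pp' [i' i'_lt ->]]].
- exact: increasing_below_coherent g_incr.
- by move: (piece_enum_le pp'); rewrite ltnn.
- by move: (piece_enum_le pp); rewrite jk ltnn.
apply: prefix_coherent_comp (IH _ pp') _ _ _ (ltnW_homo (embed_homo _ _ _)).
- by rewrite {1}type_m_pieces; exact: (embed_coherent (type_piece_gt0 j)).
- by move=> t; exact: piece_embed_lt.
- by move=> t; exact: piece_embed_lt.
Qed.

Definition canonical_family : {fset {fset T}} :=
  [fset A in fpowerset (fimg (m k) g) |
     `[< exists j f, piece_enum j f /\ A = fimg (m j) f >]].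

Lemma mem_canonical A :
  A \in canonical_family <-> exists j f, piece_enum j f /\ A = fimg (m j) f.
Proof.
rewrite !inE fpowersetE; split=> [/andP[_ /asboolP //]|pA].
apply/andP; split; last exact/asboolP.
by case: pA => j [f [pf ->]]; exact: piece_enum_sub.
Qed.

Lemma rank_canonical j f : piece_enum j f -> rank canonical_family (fimg (m j) f) = j.
Proof.
elim/ltn_ind: j f => j IH f pf; rewrite rankE; apply/eqP; rewrite eqn_leq; apply/andP; split.
  apply/bigmax_leqP_seq => _ /mem_canonical[j' [f' [pf' ->]]] lt_B.
  have := fproper_ltn_card lt_B.
  rewrite (card_fimg (piece_enum_incr pf')) (card_fimg (piece_enum_incr pf)).
  rewrite (leqW_mono (type_m_leq ty)) => lt_j'j.
  by rewrite IH.
case: j IH f pf => // j IH f pf.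
have pc := piece_enum_piece pf (ltnW (type_n_gt1 ty j)).
have child_mem : fimg (m j) (f \o piece_embed j 0) \in canonical_family.
  by apply/mem_canonical; exists j, (f \o piece_embed j 0).
have child_lt : fimg (m j) (f \o piece_embed j 0) `<` fimg (m j.+1) f.
  rewrite fproperEcard fimg_comp_sub => [|t].
    by rewrite (card_fimg (piece_enum_incr pc)) (card_fimg (piece_enum_incr pf)) (type_m_ltS ty).
  by apply: piece_embed_lt; exact: ltnW (type_n_gt1 ty j).
by apply: (leq_trans _ (leq_bigmax_seq _ child_mem child_lt)); rewrite IH.
Qed.

Lemma level_canonical j A :
  level canonical_family j A <-> exists2 f, piece_enum j f & A = fimg (m j) f.
Proof.
split=> [[/mem_canonical[j' [f [pf ->]]]]|[f pf ->]].
  by rewrite rank_canonical // => <-; exists f.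
by split; [apply/mem_canonical; exists j, f | exact: rank_canonical].
Qed.

Lemma card_canonical j A : level canonical_family j A -> #|` A| = m j.
Proof. by case/level_canonical => f pf ->; exact: card_fimg (piece_enum_incr pf). Qed.

Lemma canonical_decomposition j f : piece_enum j.+1 f ->
  decomposition canonical_family j (r j.+1) (fimg (m j.+1) f)
    (fun i : 'I_(n j.+1) => fimg (m j) (f \o piece_embed j i)).
Proof.
move=> pf; have f_incr := piece_enum_incr pf.
apply/decompositionP; exists (fimg (r j.+1) f); split.
- move=> i; apply/level_canonical; exists (f \o piece_embed j i) => //.
  exact: piece_enum_piece pf (ltn_ord i).
- have n_gt0 : 0 < n j.+1 by exact: ltnW (type_n_gt1 ty j).
  rewrite (type_mS ty) in f_incr.
  have := fimg_ordered_delta (type_piece_gt0 j) n_gt0 f_incr.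
  by rewrite -(type_mS ty) -type_m_pieces.
- rewrite card_fimg //; apply: (increasing_below_sub f_incr).
  exact: ltnW (ltn_trans (type_r_lt ty j) (type_m_ltS ty j)).
Qed.

Theorem canonical_scheme : construction_scheme m n r (fimg (m k) g) canonical_family.
Proof.
split.
- by move=> A /mem_canonical[j [f [pf ->]]]; exact: piece_enum_sub.
- move=> A sA; exists (fimg (m k) g) => //.
  by apply/mem_canonical; exists k, g; split=> //; exact: piece_enum_top.
- exact: card_canonical.
- move=> j E E' /level_canonical[f pf ->] /level_canonical[f' pf' ->]; split.
    exact: init_seg_coherent (piece_enum_incr pf) (piece_enum_incr pf')
                             (piece_enum_coherent pf pf').
  rewrite fsetIC.
  exact: init_seg_coherent (piece_enum_incr pf') (piece_enum_incr pf)
                           (piece_enum_coherent pf' pf).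
- move=> j A /level_canonical[f pf ->]; eexists; split; first exact: canonical_decomposition pf.
  move=> s' /decompositionP[R' [ls' dS' cardR']] i.
  have /decompositionP[R [ls dS cardR]] := canonical_decomposition pf.
  apply: ordered_delta_unique (type_n_gt1 ty j) dS' dS _ _ i; first by rewrite cardR cardR'.
  by move=> i'; rewrite (card_canonical (ls' i')) (card_canonical (ls i')).
Qed.

End CanonicalScheme.

Theorem mainTheorem18 (disp : Order.disp_t) (T : orderType disp)
    (m n r : nat -> nat) (X : {fset T}) :
  is_type m n r ->
  ((exists F : {fset {fset T}}, construction_scheme m n r X F) <->
     (exists k, #|` X| = m k)) /\
  (forall F G : {fset {fset T}},
     construction_scheme m n r X F -> construction_scheme m n r X G -> F = G).
Proof.
move=> ty; split; last first.
  move=> F G HF HG; apply/eqP.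
  by rewrite eqEfsubset (scheme_fsubset ty HF HG) (scheme_fsubset ty HG HF).
split=> [[F HF]|[k cardX]]; first by exists (rank F X); exact: scheme_card_top HF.
have [x0 _] : exists x, x \in X by apply/fset0Pn; rewrite -cardfs_gt0 cardX (type_m_gt0 ty).
have [g g_incr ->] := fset_increasing_enum x0 X.
rewrite cardX in g_incr *; exists (canonical_family m n r k g).
exact: canonical_scheme.
Qed.
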